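(* Let $\mathcal O\subset\mathbb R^2$ be a connected open set and let $\mathcal M=(\mathcal O,\Gamma)$ be an affine surface. Suppose there exist real linear functions $L_1,L_2,L_3$ such that $\{e^{L_1}\cos(L_2),e^{L_1}\sin(L_2),e^{L_3}\}$ is a basis of $\mathcal Q(\mathcal M)$. Then $\Gamma$ has constant Christoffel symbols (i.e. is Type $\mathcal A$), and $\Gamma$ is linearly equivalent to one of: $\Gamma_c^2(b_1,b_2)$ for some $b_1\neq1$ with $(b_1,b_2)\neq(0,0)$; $\Gamma_5^1(c)$ for some $c\in\mathbb R$; or $\Gamma_5^0$.
   Context: An affine manifold $(M,\nabla)$ is a smooth manifold $M$ of dimension $m\ge 2$ with a torsion-free connection $\nabla$ on $TM$; in local coordinates $\nabla_{\partial_{x^i}}\partial_{x^j}=\Gamma_{ij}^k\partial_{x^k}$ (summation over repeated indices). The curvature is $R(X,Y)Z=\nabla_X\nabla_YZ-\nabla_Y\nabla_XZ-\nabla_{[X,Y]}Z$, the Ricci tensor is $\rho(Y,Z)=\mathrm{Tr}(X\mapsto R(X,Y)Z)$, and $\rho_s(X,Y)=\frac12(\rho(X,Y)+\rho(Y,X))$. The Hessian is $\mathcal H_\nabla f=(\partial_{x^i}\partial_{x^j}f-\Gamma_{ij}^k\partial_{x^k}f)\,dx^i\otimes dx^j$. The quasi-Einstein solution space is $\mathcal Q(M,\nabla)=\{f\in C^\infty(M):\mathcal H_\nabla f+\frac{1}{m-1}f\rho_s=0\}$. For real constants, $\Gamma(a,b,c,d,e,f)$ denotes the connection on (an open subset of)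 $\mathbb R^2$ whose Christoffel symbols in the standard coordinates $(x^1,x^2)$ are the constants $\Gamma_{11}^1=a$, $\Gamma_{11}^2=b$, $\Gamma_{12}^1=\Gamma_{21}^1=c$, $\Gamma_{12}^2=\Gamma_{21}^2=d$, $\Gamma_{22}^1=e$, $\Gamma_{22}^2=f$. Two connections with constant Christoffel symbols are linearly equivalent if there is $T\in GL(2,\mathbb R)$ with $T^*\nabla_2=\nabla_1$. A real linear function is $L(x^1,x^2)=\alpha_1x^1+\alpha_2x^2$, $\alpha_i\in\mathbb R$. The specific connections: for $b_1\ne1$, $\Gamma_c^2(b_1,b_2):=\Gamma(1+b_1,0,b_2,1,\frac{1+b_2^2}{b_1-1},0)$; $\Gamma_5^1(c):=\Gamma(1,0,0,0,1+c^2,2c)$; $\Gamma_5^0:=\Gamma(1,0,0,1,-1,0)$. *)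

From Stdlib Require Import Reals Lra List ClassicalEpsilon.
Open Scope R_scope.

(* Coordinate indices on R^2: I1 ~ x^1, I2 ~ x^2 *)
Inductive idx := I1 | I2.

Definition sum_idx (g : idx -> R) : R := g I1 + g I2.

Definition fn2 := R -> R -> R.

Definition dist2 (x y u v : R) : R := (u - x)^2 + (v - y)^2.

Definition is_open (O : R -> R -> Prop) : Prop :=
  forall x y, O x y -> exists eps, 0 < eps /\
    forall u v, dist2 x y u v < eps^2 -> O u v.

Definition is_connected (O : R -> R -> Prop) : Prop :=
  forall A B : R -> R -> Prop, is_open A -> is_open B ->
    (forall x y, O x y <-> (A x y \/ B x y)) ->
    (forall x y, ~ (A x y /\ B x y)) ->
    (forall x y, ~ A x y) \/ (forall x y, ~ B x y).

Definition has_partial (i : idx) (g : fn2) (x y l : R) : Prop :=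
  match i with
  | I1 => derivable_pt_lim (fun t => g t y) x l
  | I2 => derivable_pt_lim (fun t => g x t) y l
  end.

(* the partial derivative function (meaningful where it exists) *)
Definition pd (i : idx) (g : fn2) : fn2 :=
  fun x y => epsilon (inhabits 0) (fun l => has_partial i g x y l).

Fixpoint iterD (w : list idx) (f : fn2) : fn2 :=
  match w with
  | nil => f
  | i :: w' => pd i (iterD w' f)
  end.

Definition continuous2_at (g : fn2) (x y : R) : Prop :=
  forall eps, 0 < eps -> exists delta, 0 < delta /\
    forall u v, dist2 x y u v < delta^2 -> Rabs (g u v - g x y) < eps.

Definition smooth_on (O : R -> R -> Prop) (f : fn2) : Prop :=
  forall (w : list idx) x y, O x y ->
    continuous2_at (iterD w f) x y /\
    forall i, exists l, has_partial i (iterD w f) x y l.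

(* A torsion-free connection on (an open subset of) R^2, given by its
   Christoffel symbols Gamma_{ij}^k (Gamma_{12} = Gamma_{21}). *)
Record conn := mkConn {
  G11_1 : fn2; G11_2 : fn2; G12_1 : fn2; G12_2 : fn2; G22_1 : fn2; G22_2 : fn2 }.

(* Gam c i j k = Gamma_{ij}^k *)
Definition Gam (c : conn) (i j k : idx) : fn2 :=
  match i, j, k with
  | I1, I1, I1 => G11_1 c | I1, I1, I2 => G11_2 c
  | I1, I2, I1 => G12_1 c | I1, I2, I2 => G12_2 c
  | I2, I1, I1 => G12_1 c | I2, I1, I2 => G12_2 c
  | I2, I2, I1 => G22_1 c | I2, I2, I2 => G22_2 c
  end.

Definition affine_surface (O : R -> R -> Prop) (c : conn) : Prop :=
  forall i j k, smooth_on O (Gam c i j k).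

(* Curvature components: R(d_i, d_j) d_k = Rm c i j k l * d_l *)
Definition Rm (c : conn) (i j k l : idx) : fn2 := fun x y =>
  pd i (Gam c j k l) x y - pd j (Gam c i k l) x y
  + sum_idx (fun m => Gam c j k m x y * Gam c i m l x y
                      - Gam c i k m x y * Gam c j m l x y).

(* Ricci tensor rho(d_j, d_k) = Tr (X |-> R(X, d_j) d_k) *)
Definition ricci (c : conn) (j k : idx) : fn2 := fun x y =>
  sum_idx (fun i => Rm c i j k i x y).

Definition ricci_s (c : conn) (j k : idx) : fn2 := fun x y =>
  (ricci c j k x y + ricci c k j x y) / 2.

Definition hessian (c : conn) (f : fn2) (i j : idx) : fn2 := fun x y =>
  pd i (pd j f) x y - sum_idx (fun k => Gam c i j k x y * pd k f x y).

(* Quasi-Einstein solution space, m = 2 so 1/(m-1) = 1 *)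
Definition in_Q (O : R -> R -> Prop) (c : conn) (f : fn2) : Prop :=
  smooth_on O f /\
  forall x y, O x y -> forall i j,
    hessian c f i j x y + (1 / (2 - 1)) * f x y * ricci_s c i j x y = 0.

Definition is_basis3_Q (O : R -> R -> Prop) (c : conn) (f1 f2 f3 : fn2) : Prop :=
  in_Q O c f1 /\ in_Q O c f2 /\ in_Q O c f3 /\
  (forall a1 a2 a3 : R,
     (forall x y, O x y -> a1 * f1 x y + a2 * f2 x y + a3 * f3 x y = 0) ->
     a1 = 0 /\ a2 = 0 /\ a3 = 0) /\
  (forall f, in_Q O c f -> exists a1 a2 a3 : R,
     forall x y, O x y -> f x y = a1 * f1 x y + a2 * f2 x y + a3 * f3 x y).

(* Connections with constant Christoffel symbols:
   Gamma(a,b,c,d,e,f) with G11^1=a, G11^2=b, G12^1=c, G12^2=d, G22^1=e, G22^2=f *)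
Record cconn := CC { ca : R; cb : R; cc : R; cd : R; ce : R; cf : R }.

Definition cGam (g : cconn) (i j k : idx) : R :=
  match i, j, k with
  | I1, I1, I1 => ca g | I1, I1, I2 => cb g
  | I1, I2, I1 => cc g | I1, I2, I2 => cd g
  | I2, I1, I1 => cc g | I2, I1, I2 => cd g
  | I2, I2, I1 => ce g | I2, I2, I2 => cf g
  end.

Definition const_on (O : R -> R -> Prop) (c : conn) (g : cconn) : Prop :=
  forall x y, O x y -> forall i j k, Gam c i j k x y = cGam g i j k.

(* Linear equivalence: T in GL(2,R) with T^* nabla_2 = nabla_1, i.e. for the
   linear map x = T y,  T_{kc} G1_{ab}^c = T_{ia} T_{jb} G2_{ij}^k. *)
Definition lin_equiv (g1 g2 : cconn) : Prop :=
  exists T : idx -> idx -> R,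
    T I1 I1 * T I2 I2 - T I1 I2 * T I2 I1 <> 0 /\
    forall a b k,
      sum_idx (fun c => T k c * cGam g1 a b c) =
      sum_idx (fun i => sum_idx (fun j => T i a * T j b * cGam g2 i j k)).

Definition Gc2 (b1 b2 : R) : cconn :=
  CC (1 + b1) 0 b2 1 ((1 + b2^2) / (b1 - 1)) 0.
Definition G51 (c : R) : cconn := CC 1 0 0 0 (1 + c^2) (2 * c).
Definition G50 : cconn := CC 1 0 0 1 (-1) 0.

Definition linfun (a1 a2 : R) : fn2 := fun x y => a1 * x + a2 * y.

(* For an exponent vector γ the quasi-Einstein equation for e^{γ·x} reads
   γ_i γ_j − Γ_ij^k γ_k + ρ_s(∂_i, ∂_j) = 0.  Applying it to γ = a + ib (the
   complex exponential behind e^{L1}cos L2, e^{L1}sin L2) and to γ = d (behind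
   e^{L3}) and eliminating ρ_s leaves, at every point,
     a_i a_j − b_i b_j − d_i d_j = Γ_ij^k (a − d)_k,   a_i b_j + b_i a_j = Γ_ij^k b_k.
   Linear independence of the basis forces b ≠ 0, and then a − d and b are
   linearly independent, so this system determines Γ, which is therefore
   constant.  In the linear coordinates (x·(a − d), x·b) the connection takes
   the normal form [Gpq p q] below, a rescaling of one of the listed models. *)

From Pilot Require Import Defs.
From Stdlib Require Import Reals Lra ClassicalEpsilon FunctionalExtensionality Classical.
From Coquelicot Require Coquelicot.
Open Scope R_scope.

Definition coord (i : idx) (p1 p2 : R) : R := match i with I1 => p1 | I2 => p2 end.

Definition exp_trig (a1 a2 b1 b2 u v : R) : fn2 := fun x y =>
  exp (a1 * x + a2 * y) * (u * cos (b1 * x + b2 * y) + v * sin (b1 * x + b2 * y)).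

Lemma pd_has_partial i g (F : fn2) :
  (forall x y, has_partial i g x y (F x y)) -> pd i g = F.
Proof.
  intros H; apply functional_extensionality; intro x;
    apply functional_extensionality; intro y.
  assert (Hex : exists l, has_partial i g x y l) by (exists (F x y); apply H).
  pose proof (epsilon_spec (inhabits 0) _ Hex) as Hl.
  specialize (H x y); unfold pd.
  destruct i; eapply uniqueness_limite; eauto.
Qed.

Section ExpTrig.

(* Imported only inside this section: Coquelicot's [is_open] would shadow the one of Defs. *)
Import Coquelicot.Coquelicot.

Variables a1 a2 b1 b2 : R.

Lemma pd_exp_trig i u v :
  pd i (exp_trig a1 a2 b1 b2 u v) =
  exp_trig a1 a2 b1 b2 (coord i a1 a2 * u + coord i b1 b2 * v)
                       (coord i a1 a2 * v - coord i b1 b2 * u).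
Proof.
  apply pd_has_partial; intros x y.
  destruct i; simpl; apply is_derive_Reals; unfold exp_trig; auto_derive; auto; ring.
Qed.

(* Real and imaginary parts of the quasi-Einstein operator applied to e^{(a+ib)·x}. *)
Definition qe_re (c : conn) (i j : idx) (x y : R) : R :=
  coord i a1 a2 * coord j a1 a2 - coord i b1 b2 * coord j b1 b2
  - (Gam c i j I1 x y * a1 + Gam c i j I2 x y * a2) + ricci_s c i j x y.

Definition qe_im (c : conn) (i j : idx) (x y : R) : R :=
  coord i a1 a2 * coord j b1 b2 + coord i b1 b2 * coord j a1 a2
  - (Gam c i j I1 x y * b1 + Gam c i j I2 x y * b2).

Lemma quasi_einstein_exp_trig c u v i j x y :
  hessian c (exp_trig a1 a2 b1 b2 u v) i j x y
  + 1 / (2 - 1) * exp_trig a1 a2 b1 b2 u v x y * ricci_s c i j x y =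
  exp_trig a1 a2 b1 b2 (qe_re c i j x y * u + qe_im c i j x y * v)
                       (qe_re c i j x y * v - qe_im c i j x y * u) x y.
Proof.
  unfold hessian, sum_idx; rewrite !pd_exp_trig.
  replace (1 / (2 - 1)) with 1 by field.
  unfold exp_trig, qe_re, qe_im; cbn [coord]; ring.
Qed.

Lemma exp_trig_eq0 u v x y :
  exp_trig a1 a2 b1 b2 u v x y = 0 -> exp_trig a1 a2 b1 b2 (- v) u x y = 0 ->
  u = 0 /\ v = 0.
Proof.
  unfold exp_trig; set (t := b1 * x + b2 * y); intros H1 H2.
  assert (HE := exp_pos (a1 * x + a2 * y)).
  assert (HCS := sin2_cos2 t); unfold Rsqr in HCS.
  apply Rmult_integral in H1 as [H1 | H1]; [lra |].
  apply Rmult_integral in H2 as [H2 | H2]; [lra |].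
  assert (Hu : u = cos t * (u * cos t + v * sin t) + sin t * (- v * cos t + u * sin t)).
  { transitivity (u * (sin t * sin t + cos t * cos t)); [rewrite HCS |]; ring. }
  assert (Hv : v = sin t * (u * cos t + v * sin t) - cos t * (- v * cos t + u * sin t)).
  { transitivity (v * (sin t * sin t + cos t * cos t)); [rewrite HCS |]; ring. }
  rewrite H1, H2 in Hu, Hv; split; lra.
Qed.

Lemma in_Q_exp_trig_qe O c x y :
  in_Q O c (exp_trig a1 a2 b1 b2 1 0) -> in_Q O c (exp_trig a1 a2 b1 b2 0 1) ->
  O x y -> forall i j, qe_re c i j x y = 0 /\ qe_im c i j x y = 0.
Proof.
  intros [_ Hcos] [_ Hsin] Hxy i j.
  specialize (Hcos x y Hxy i j); specialize (Hsin x y Hxy i j).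
  rewrite quasi_einstein_exp_trig in Hcos, Hsin.
  destruct (exp_trig_eq0 (qe_re c i j x y) (- qe_im c i j x y) x y) as [Hre Him].
  - rewrite <- Hcos; f_equal; ring.
  - rewrite <- Hsin; f_equal; ring.
  - split; lra.
Qed.

End ExpTrig.

Lemma exp_trig_freq0 d1 d2 u v x y :
  exp_trig d1 d2 0 0 u v x y = exp (d1 * x + d2 * y) * u.
Proof.
  unfold exp_trig; replace (0 * x + 0 * y) with 0 by ring.
  rewrite cos_0, sin_0; ring.
Qed.

Lemma in_Q_exp_qe O c d1 d2 x y :
  in_Q O c (exp_trig d1 d2 0 0 1 0) -> O x y -> forall i j, qe_re d1 d2 0 0 c i j x y = 0.
Proof.
  intros [_ HQ] Hxy i j; specialize (HQ x y Hxy i j).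
  rewrite quasi_einstein_exp_trig, exp_trig_freq0 in HQ.
  assert (HE := exp_pos (d1 * x + d2 * y)).
  apply Rmult_integral in HQ as [HQ | HQ]; lra.
Qed.

(* The system left after eliminating ρ_s, for frequencies a + ib and d. *)
Definition qe_system (a1 a2 b1 b2 d1 d2 : R) (G : idx -> idx -> idx -> R) : Prop :=
  forall i j,
    coord i a1 a2 * coord j a1 a2 - coord i b1 b2 * coord j b1 b2 - coord i d1 d2 * coord j d1 d2
      = G i j I1 * (a1 - d1) + G i j I2 * (a2 - d2) /\
    coord i a1 a2 * coord j b1 b2 + coord i b1 b2 * coord j a1 a2
      = G i j I1 * b1 + G i j I2 * b2.

Lemma in_Q_qe_system O c a1 a2 b1 b2 d1 d2 x y :
  in_Q O c (exp_trig a1 a2 b1 b2 1 0) -> in_Q O c (exp_trig a1 a2 b1 b2 0 1) ->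
  in_Q O c (exp_trig d1 d2 0 0 1 0) -> O x y ->
  qe_system a1 a2 b1 b2 d1 d2 (fun i j k => Gam c i j k x y).
Proof.
  intros Hcos Hsin Hexp Hxy i j.
  destruct (in_Q_exp_trig_qe _ _ _ _ _ _ _ _ Hcos Hsin Hxy i j) as [Hre Him].
  pose proof (in_Q_exp_qe _ _ _ _ _ _ Hexp Hxy i j) as Hd.
  unfold qe_re, qe_im in *.
  assert (H0 : forall k, coord k 0 0 = 0) by (intros []; reflexivity).
  rewrite !H0 in Hd; split; lra.
Qed.

Lemma qe_freq_eq0 a d b a' d' b' g g' :
  a * a - b * b - d * d = g * (a - d) + g' * (a' - d') ->
  a * b + b * a = g * b + g' * b' ->
  (a - d) * b' = (a' - d') * b -> b = 0.
Proof.
  intros P Q Hdep.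
  assert (K : - (b * ((a - d) ^ 2 + b ^ 2))
              = b * (a * a - b * b - d * d) - (a - d) * (a * b + b * a)) by ring.
  rewrite P, Q in K.
  assert (Hg' : g' * ((a - d) * b' - (a' - d') * b) = 0) by (rewrite Hdep; ring).
  assert (Hb : b * ((a - d) ^ 2 + b ^ 2) = 0) by lra.
  apply Rmult_integral in Hb as [Hb | Hb]; [exact Hb |].
  destruct (Req_dec b 0) as [| Hb0]; [assumption |].
  pose proof (pow2_ge_0 (a - d)); pose proof (pow_lt (b * b) 1); nra.
Qed.

Lemma qe_system_det_neq0 a1 a2 b1 b2 d1 d2 G :
  qe_system a1 a2 b1 b2 d1 d2 G -> b1 <> 0 \/ b2 <> 0 ->
  (a1 - d1) * b2 - (a2 - d2) * b1 <> 0.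
Proof.
  intros H Hb HD.
  destruct (H I1 I1) as [P1 Q1]; destruct (H I2 I2) as [P2 Q2]; simpl in *.
  destruct Hb as [Hb | Hb]; apply Hb.
  - apply (qe_freq_eq0 a1 d1 b1 a2 d2 b2 (G I1 I1 I1) (G I1 I1 I2)); lra.
  - apply (qe_freq_eq0 a2 d2 b2 a1 d1 b1 (G I2 I2 I2) (G I2 I2 I1)); lra.
Qed.

Lemma det2_unique e1 e2 b1 b2 u1 u2 v1 v2 :
  e1 * b2 - e2 * b1 <> 0 ->
  u1 * e1 + u2 * e2 = v1 * e1 + v2 * e2 -> u1 * b1 + u2 * b2 = v1 * b1 + v2 * b2 ->
  u1 = v1 /\ u2 = v2.
Proof.
  intros HD He Hb.
  assert (H1 : (u1 - v1) * (e1 * b2 - e2 * b1) = 0).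
  { transitivity (b2 * (u1 * e1 + u2 * e2) - e2 * (u1 * b1 + u2 * b2)
                  - (b2 * (v1 * e1 + v2 * e2) - e2 * (v1 * b1 + v2 * b2))); [ring |].
    rewrite He, Hb; ring. }
  assert (H2 : (u2 - v2) * (e1 * b2 - e2 * b1) = 0).
  { transitivity (e1 * (u1 * b1 + u2 * b2) - b1 * (u1 * e1 + u2 * e2)
                  - (e1 * (v1 * b1 + v2 * b2) - b1 * (v1 * e1 + v2 * e2))); [ring |].
    rewrite He, Hb; ring. }
  apply Rmult_integral in H1 as [H1 | H1]; [| contradiction].
  apply Rmult_integral in H2 as [H2 | H2]; [| contradiction].
  split; lra.
Qed.

Lemma qe_system_unique a1 a2 b1 b2 d1 d2 G G' :
  (a1 - d1) * b2 - (a2 - d2) * b1 <> 0 ->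
  qe_system a1 a2 b1 b2 d1 d2 G -> qe_system a1 a2 b1 b2 d1 d2 G' ->
  forall i j k, G i j k = G' i j k.
Proof.
  intros HD H H' i j k.
  destruct (H i j) as [P Q]; destruct (H' i j) as [P' Q'].
  destruct (det2_unique (a1 - d1) (a2 - d2) b1 b2 (G i j I1) (G i j I2) (G' i j I1) (G' i j I2))
    as [E1 E2]; [exact HD | lra | lra |].
  destruct k; assumption.
Qed.

Definition cconn_of (G : idx -> idx -> idx -> R) : cconn :=
  CC (G I1 I1 I1) (G I1 I1 I2) (G I1 I2 I1) (G I1 I2 I2) (G I2 I2 I1) (G I2 I2 I2).

Lemma cGam_cconn_of_Gam c x y i j k :
  cGam (cconn_of (fun i j k => Gam c i j k x y)) i j k = Gam c i j k x y.
Proof. destruct i, j, k; reflexivity. Qed.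

Lemma lin_equiv_trans g1 g2 g3 : lin_equiv g1 g2 -> lin_equiv g2 g3 -> lin_equiv g1 g3.
Proof.
  intros [T [HdT HT]] [S [HdS HS]].
  exists (fun k c => S k I1 * T I1 c + S k I2 * T I2 c); split.
  - replace (_ * _ - _ * _)
      with ((S I1 I1 * S I2 I2 - S I1 I2 * S I2 I1) * (T I1 I1 * T I2 I2 - T I1 I2 * T I2 I1))
      by ring.
    now apply Rmult_integral_contrapositive.
  - intros a b k.
    transitivity (S k I1 * sum_idx (fun c => T I1 c * cGam g1 a b c)
                  + S k I2 * sum_idx (fun c => T I2 c * cGam g1 a b c));
      [unfold sum_idx; ring |].
    rewrite !HT.
    transitivity (T I1 a * T I1 b * sum_idx (fun m => S k m * cGam g2 I1 I1 m)
                  + T I1 a * T I2 b * sum_idx (fun m => S k m * cGam g2 I1 I2 m)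
                  + T I2 a * T I1 b * sum_idx (fun m => S k m * cGam g2 I2 I1 m)
                  + T I2 a * T I2 b * sum_idx (fun m => S k m * cGam g2 I2 I2 m));
      [unfold sum_idx; ring |].
    rewrite !HS; unfold sum_idx; ring.
Qed.

Definition normal_form (g : cconn) : Prop :=
  (exists b1 b2 : R, b1 <> 1 /\ (b1, b2) <> (0, 0) /\ lin_equiv g (Gc2 b1 b2))
  \/ (exists c0 : R, lin_equiv g (G51 c0))
  \/ lin_equiv g G50.

Lemma lin_equiv_normal_form g h : lin_equiv g h -> normal_form h -> normal_form g.
Proof.
  intros E [[b1 [b2 [H1 [H2 H3]]]] | [[c0 H] | H]].
  - left; exists b1, b2; repeat split; auto; exact (lin_equiv_trans _ _ _ E H3).
  - right; left; exists c0; exact (lin_equiv_trans _ _ _ E H).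
  - right; right; exact (lin_equiv_trans _ _ _ E H).
Qed.

(* The connection in the coordinates (x·(a − d), x·b), where d = p (a − d) + q b. *)
Definition Gpq (p q : R) : cconn := CC (1 + 2 * p) 0 q (1 + p) (-1) (2 * q).

Lemma qe_system_lin_equiv_Gpq a1 a2 b1 b2 d1 d2 e1 e2 p q G :
  a1 = d1 + e1 -> a2 = d2 + e2 -> d1 = e1 * p + b1 * q -> d2 = e2 * p + b2 * q ->
  e1 * b2 - e2 * b1 <> 0 ->
  qe_system a1 a2 b1 b2 d1 d2 G -> lin_equiv (cconn_of G) (Gpq p q).
Proof.
  intros -> -> -> -> HD H.
  exists (fun k c => match k with I1 => coord c e1 e2 | I2 => coord c b1 b2 end).
  split; [simpl; lra |].
  destruct (H I1 I1) as [P11 Q11]; destruct (H I1 I2) as [P12 Q12];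
    destruct (H I2 I2) as [P22 Q22]; simpl in *.
  intros a b k; destruct a, b, k; unfold sum_idx; simpl; lra.
Qed.

Lemma Gpq_lin_equiv_G51 q : lin_equiv (Gpq (-1) q) (G51 q).
Proof.
  exists (fun k c => match k, c with I1, I1 => -1 | I1, I2 => q | I2, I1 => 0 | I2, I2 => 1 end).
  split; [lra |]; intros a b k; destruct a, b, k; unfold sum_idx; simpl; ring.
Qed.

Lemma Gpq_lin_equiv_G50 : lin_equiv (Gpq 0 0) G50.
Proof.
  exists (fun k c => match k, c with I1, I1 => 1 | I1, I2 => 0 | I2, I1 => 0 | I2, I2 => 1 end).
  split; [lra |]; intros a b k; destruct a, b, k; unfold sum_idx; simpl; ring.
Qed.

Lemma Gpq_lin_equiv_Gc2 p q :
  1 + p <> 0 -> lin_equiv (Gpq p q) (Gc2 (p / (1 + p)) (q / (1 + p))).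
Proof.
  intros Hp.
  assert (Hb : p / (1 + p) - 1 <> 0).
  { replace (p / (1 + p) - 1) with (- / (1 + p)) by (field; exact Hp).
    apply Ropp_neq_0_compat, Rinv_neq_0_compat, Hp. }
  exists (fun k c => match k, c with I1, I1 => 1 + p | I1, I2 => q | I2, I1 => 0 | I2, I2 => 1 end).
  split; [simpl; lra |].
  intros a b k; destruct a, b, k; unfold sum_idx, Gc2; simpl; field; split; auto; lra.
Qed.

Lemma Gpq_normal_form p q : normal_form (Gpq p q).
Proof.
  destruct (Req_dec (1 + p) 0) as [Hp | Hp].
  - right; left; exists q; replace p with (-1) by lra; apply Gpq_lin_equiv_G51.
  - destruct (classic ((p, q) = (0, 0))) as [E | Hpq].
    + injection E as -> ->; right; right; apply Gpq_lin_equiv_G50.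
    + assert (Hp' : p = p / (1 + p) * (1 + p)) by (field; exact Hp).
      assert (Hq' : q = q / (1 + p) * (1 + p)) by (field; exact Hp).
      left; exists (p / (1 + p)), (q / (1 + p)); repeat split.
      * intros E; rewrite E in Hp'; lra.
      * intros E; injection E as Ep Eq; apply Hpq.
        f_equal; [rewrite Hp', Ep | rewrite Hq', Eq]; ring.
      * exact (Gpq_lin_equiv_Gc2 p q Hp).
Qed.

Lemma qe_system_normal_form a1 a2 b1 b2 d1 d2 G :
  (a1 - d1) * b2 - (a2 - d2) * b1 <> 0 ->
  qe_system a1 a2 b1 b2 d1 d2 G -> normal_form (cconn_of G).
Proof.
  intros HD H.
  set (D := (a1 - d1) * b2 - (a2 - d2) * b1) in HD.
  set (p := (d1 * b2 - b1 * d2) / D); set (q := ((a1 - d1) * d2 - (a2 - d2) * d1) / D).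
  apply (lin_equiv_normal_form _ (Gpq p q)); [| apply Gpq_normal_form].
  apply (qe_system_lin_equiv_Gpq a1 a2 b1 b2 d1 d2 (a1 - d1) (a2 - d2)); try ring;
    try (unfold p, q, D in *; field); assumption.
Qed.

Lemma lin_indep3_domain_nonempty (O : R -> R -> Prop) (f1 f2 f3 : fn2) :
  (forall a1 a2 a3 : R,
     (forall x y, O x y -> a1 * f1 x y + a2 * f2 x y + a3 * f3 x y = 0) ->
     a1 = 0 /\ a2 = 0 /\ a3 = 0) ->
  exists x y, O x y.
Proof.
  intros Hind; apply NNPP; intros Hne.
  destruct (Hind 1 0 0) as [H _]; [| lra].
  intros x y Hxy; exfalso; eauto.
Qed.

Lemma lin_indep3_sin_freq_neq0 (O : R -> R -> Prop) (f1 f3 : fn2) a1 a2 b1 b2 :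
  (forall u1 u2 u3 : R,
     (forall x y, O x y ->
        u1 * f1 x y + u2 * (exp (linfun a1 a2 x y) * sin (linfun b1 b2 x y)) + u3 * f3 x y = 0) ->
     u1 = 0 /\ u2 = 0 /\ u3 = 0) ->
  b1 <> 0 \/ b2 <> 0.
Proof.
  intros Hind.
  destruct (Req_dec b1 0) as [-> | Hb1]; [| now left].
  destruct (Req_dec b2 0) as [-> | Hb2]; [| now right].
  destruct (Hind 0 1 0) as [_ [H _]]; [| lra].
  intros x y _; unfold linfun; replace (0 * x + 0 * y) with 0 by ring.
  rewrite sin_0; ring.
Qed.

Lemma exp_cos_exp_trig a1 a2 b1 b2 :
  (fun x y => exp (linfun a1 a2 x y) * cos (linfun b1 b2 x y)) = exp_trig a1 a2 b1 b2 1 0.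
Proof.
  do 2 (apply functional_extensionality; intro); unfold exp_trig, linfun; ring.
Qed.

Lemma exp_sin_exp_trig a1 a2 b1 b2 :
  (fun x y => exp (linfun a1 a2 x y) * sin (linfun b1 b2 x y)) = exp_trig a1 a2 b1 b2 0 1.
Proof.
  do 2 (apply functional_extensionality; intro); unfold exp_trig, linfun; ring.
Qed.

Lemma exp_exp_trig d1 d2 : (fun x y => exp (linfun d1 d2 x y)) = exp_trig d1 d2 0 0 1 0.
Proof.
  do 2 (apply functional_extensionality; intro); rewrite exp_trig_freq0.
  unfold linfun; ring.
Qed.

Theorem theorem2p7 (O : R -> R -> Prop) (c : conn) :
  is_open O -> is_connected O -> affine_surface O c ->
  (exists a1 a2 b1 b2 d1 d2 : R,
     is_basis3_Q O c
       (fun x y => exp (linfun a1 a2 x y) * cos (linfun b1 b2 x y))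
       (fun x y => exp (linfun a1 a2 x y) * sin (linfun b1 b2 x y))
       (fun x y => exp (linfun d1 d2 x y))) ->
  exists g : cconn, const_on O c g /\
    ((exists b1 b2 : R, b1 <> 1 /\ (b1, b2) <> (0, 0) /\ lin_equiv g (Gc2 b1 b2))
     \/ (exists c0 : R, lin_equiv g (G51 c0))
     \/ lin_equiv g G50).
Proof.
  intros _ _ _ (a1 & a2 & b1 & b2 & d1 & d2 & Hcos & Hsin & Hexp & Hind & _).
  destruct (lin_indep3_domain_nonempty _ _ _ _ Hind) as (x0 & y0 & H0).
  pose proof (lin_indep3_sin_freq_neq0 _ _ _ _ _ _ _ Hind) as Hb.
  rewrite exp_cos_exp_trig in Hcos; rewrite exp_sin_exp_trig in Hsin;
    rewrite exp_exp_trig in Hexp.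
  pose proof (fun x y => in_Q_qe_system O c a1 a2 b1 b2 d1 d2 x y Hcos Hsin Hexp) as Hsys.
  pose proof (qe_system_det_neq0 _ _ _ _ _ _ _ (Hsys x0 y0 H0) Hb) as HD.
  exists (cconn_of (fun i j k => Gam c i j k x0 y0)); split.
  - intros x y Hxy i j k; rewrite cGam_cconn_of_Gam.
    exact (qe_system_unique _ _ _ _ _ _ _ _ HD (Hsys x y Hxy) (Hsys x0 y0 H0) i j k).
  - exact (qe_system_normal_form _ _ _ _ _ _ _ HD (Hsys x0 y0 H0)).
Qed.
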